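(* Let $\Omega$ be a $\sigma$-compact, locally compact Hausdorff topological space, and let $\mathcal{A}$ be a linear space of continuous real-valued functions on $\Omega$ which contains all constant functions and separates the points of $\Omega$. Then the following conditions are equivalent: (i) for every compact set $K\subset\Omega$ and every constant $C\geq 1$ the set $$\{\omega\in\Omega\mid a(\omega)\leq C\sup_{K}|a| \text{ for all } a\in\mathcal{A}\}$$ is a compact subset of $\Omega$; (ii) there exists a non-negative, continuous, proper function $p\colon\Omega\to[0,\infty)$ such that $p=\sup\{a_\alpha\mid \alpha\in A\}$ pointwise for some symmetric family $(a_\alpha)_{\alpha\in A}$ of functions in $\mathcal{A}$; (iii) there exists a non-negative, proper function $p\colon\Omega\to[0,\infty)$ which is bounded on compact sets and such that $p=\sup\{a_\alpha\mid \alpha\in A\}$ pointwise for some symmetric family $(a_\alpha)_{\alpha\in A}$ of functions in $\mathcal{A}$. Moreover, if these conditions hold, the function $p$ in (ii) can be chosen so that for every compact set $L\subset\Omega$ there are finitely many members $a_{\alpha_1},\dots,a_{\alpha_m}$ of the family with $p=\max\{a_{\alpha_1},\dots,a_{\alpha_m}\}$ on $L$.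
   Context: A function $p\colon\Omega\to Z$ between topological spaces is proper if preimages of compact sets are compact. A family of functions is symmetric if together with each function $a$ it also contains $-a$. For a set $K$ and function $a$, $\sup_K|a|=\sup\{|a(\omega)|\mid\omega\in K\}$. *)

From HB Require Import structures.
From mathcomp Require Import all_boot all_order all_algebra.
From mathcomp Require Import all_classical all_reals all_analysis.
Set Implicit Arguments. Unset Strict Implicit. Unset Printing Implicit Defensive.
Import Order.TTheory GRing.Theory Num.Theory.
Import numFieldNormedType.Exports.
Local Open Scope classical_set_scope.
Local Open Scope ring_scope.

Definition sigma_compact (T : topologicalType) : Prop :=
  exists K : nat -> set T, (forall n, compact (K n)) /\ \bigcup_n K n = setT.

Definition proper_nonneg (T : topologicalType) (R : realType) (p : T -> R) : Prop :=
  forall B : set R, B `<=` [set x | 0 <= x] -> compact B -> compact (p @^-1` B).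

Definition supabs (T : topologicalType) (R : realType) (K : set T) (a : T -> R) : R :=
  sup [set `|a w| | w in K].

Definition is_pointwise_sup (T : Type) (R : realType) (F : set (T -> R)) (p : T -> R) : Prop :=
  forall w, ((p w)%:E = ereal_sup [set (f w)%:E | f in F])%E.

Definition symmetric_family (T : Type) (R : realType) (F : set (T -> R)) : Prop :=
  forall f, F f -> F (fun w => - f w).

Definition cond_i (T : topologicalType) (R : realType) (A : set (T -> R)) : Prop :=
  forall (K : set T) (C : R), compact K -> 1 <= C ->
    compact [set w | forall a, A a -> a w <= C * supabs K a].

Definition cond_ii (T : topologicalType) (R : realType) (A : set (T -> R)) : Prop :=
  exists (p : T -> R) (F : set (T -> R)),
    (forall w, 0 <= p w) /\ continuous p /\ proper_nonneg p /\
    F `<=` A /\ symmetric_family F /\ is_pointwise_sup F p.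

Definition cond_iii (T : topologicalType) (R : realType) (A : set (T -> R)) : Prop :=
  exists (p : T -> R) (F : set (T -> R)),
    (forall w, 0 <= p w) /\ proper_nonneg p /\
    (forall K : set T, compact K -> exists M : R, forall w, K w -> p w <= M) /\
    F `<=` A /\ symmetric_family F /\ is_pointwise_sup F p.

Definition cond_ii_strong (T : topologicalType) (R : realType) (A : set (T -> R)) : Prop :=
  exists (p : T -> R) (F : set (T -> R)),
    (forall w, 0 <= p w) /\ continuous p /\ proper_nonneg p /\
    F `<=` A /\ symmetric_family F /\ is_pointwise_sup F p /\
    (forall L : set T, compact L ->
       exists (m : nat) (g : 'I_m -> T -> R), (forall k, F (g k)) /\
         forall w, L w -> ((p w)%:E = \big[maxe/-oo]_(k < m) (g k w)%:E)%E).

From HB Require Import structures.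
From mathcomp Require Import all_boot all_order all_algebra.
From mathcomp Require Import all_classical all_reals all_analysis.
Import Order.TTheory GRing.Theory Num.Theory.
Import numFieldNormedType.Exports.
Local Open Scope classical_set_scope.
Local Open Scope ring_scope.

(* Let A be a linear space of continuous real functions on a sigma-compact,    *)
(* locally compact space, containing the constants, and let hull A K C be the *)
(* set of condition (i).  (ii) -> (iii) is immediate, and (iii) -> (i) holds  *)
(* because hull A K C is closed and, as |a| <= p on the family, lies in the   *)
(* compact set p^-1 [0, C * sup_K p].  For (i) -> (ii) in its strong form we  *)
(* build a compact exhaustion L n with hull A (L n) (n+2) inside int L (n+1); *)
(* on each compact annulus L (n+2) \ int L (n+1) we pick finitely many       *)
(* members of A, bounded by 1 on L n, one of which exceeds n+1 at each point  *)
(* of the annulus.  These and                                                 *)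
(* their negatives form the family; on L m its supremum p is the maximum of   *)
(* the finitely many members of index <= m, which gives continuity and local  *)
(* finiteness, and p > N outside L (N+1) gives properness.  General facts     *)
(* come first; mainTheorem1 is assembled at the end.  Hausdorffness, closure  *)

Lemma pointwise_sup_ge {T : Type} {R : realType} {F : set (T -> R)}
    {p f : T -> R} (w : T) :
  is_pointwise_sup F p -> F f -> f w <= p w.
Proof.
by move=> Fp Ff; rewrite -lee_fin (Fp w); apply: ereal_sup_ubound; exists f.
Qed.

Lemma pointwise_sup_norm {T : Type} {R : realType} {F : set (T -> R)}
    {p f : T -> R} (w : T) :
  is_pointwise_sup F p -> symmetric_family F -> F f -> `|f w| <= p w.
Proof.
move=> Fp Fsym Ff; rewrite ler_norml (pointwise_sup_ge w Fp Ff) andbT lerNl.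
exact: pointwise_sup_ge w Fp (Fsym f Ff).
Qed.

Lemma compact_real_bounded {R : realType} {B : set R} :
  compact B -> exists2 M, 0 <= M & forall x, B x -> `|x| <= M.
Proof.
move=> /compact_bounded [M0 [_ HM]]; exists (`|M0| + 1) => [|x Bx].
  by rewrite addr_ge0.
by apply: HM Bx; rewrite (ltr_pwDr ltr01 (ler_norm M0)).
Qed.

Lemma continuous_bounded_on_compact {T : topologicalType} {R : realType}
    {a : T -> R} {K : set T} :
  continuous a -> compact K -> exists M, forall w, K w -> `|a w| <= M.
Proof.
move=> ca cK; have [|M _ HM] := @compact_real_bounded R (a @` K).
  by apply: continuous_compact => //; apply: continuous_subspaceT.
by exists M => w Kw; apply: HM; exists w.
Qed.

Lemma supabs_le {T : topologicalType} {R : realType} (K : set T) (a : T -> R)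
    (M : R) :
  0 <= M -> (forall w, K w -> `|a w| <= M) -> supabs K a <= M.
Proof.
move=> M0 aM; rewrite /supabs.
have [->|/set0P[_ [w Kw _]]] := eqVneq [set `|a w| | w in K] set0.
  by rewrite sup0.
by apply: ge_sup => [|_ [v Kv <-]]; [exists `|a w|; exists w|exact: aM].
Qed.

Lemma supabs_ge {T : topologicalType} {R : realType} {K : set T} {a : T -> R}
    {w : T} :
  continuous a -> compact K -> K w -> `|a w| <= supabs K a.
Proof.
move=> ca cK Kw; have [M aM] := continuous_bounded_on_compact ca cK.
by apply: ub_le_sup; [exists M => _ [v Kv <-]; exact: aM|exists w].
Qed.

Lemma supabs_ge0 {T : topologicalType} {R : realType} (K : set T) (a : T -> R) :
  continuous a -> compact K -> 0 <= supabs K a.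
Proof.
move=> ca cK; rewrite /supabs.
have [->|/set0P[_ [w Kw _]]] := eqVneq [set `|a w| | w in K] set0.
  by rewrite sup0.
exact: le_trans (normr_ge0 _) (supabs_ge ca cK Kw).
Qed.

Definition hull {T : topologicalType} {R : realType} (A : set (T -> R))
    (K : set T) (C : R) : set T :=
  [set w | forall a, A a -> a w <= C * supabs K a].

Section Hull.
Context {T : topologicalType} {R : realType} {A : set (T -> R)}.
Hypothesis A_cont : forall a, A a -> continuous a.

Lemma closed_hull (K : set T) (C : R) : closed (hull A K C).
Proof.
have -> : hull A K C = \bigcap_(a in A) (a @^-1` [set x | x <= C * supabs K a]).
  by apply/seteqP; split => w.
apply: closed_bigI => a Aa; apply: preimage_closed; last exact: closed_le.
by move=> x _; apply: A_cont.
Qed.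

Lemma subset_hull (K : set T) (C : R) :
  compact K -> 1 <= C -> K `<=` hull A K C.
Proof.
move=> cK C1 w Kw a Aa; apply: le_trans (ler_norm _) _.
apply: le_trans (supabs_ge (A_cont _ Aa) cK Kw) _.
by apply: ler_peMl => //; apply: supabs_ge0 => //; apply: A_cont.
Qed.

Hypothesis A_scal : forall (c : R) a, A a -> A (fun w => c * a w).

(* Outside hull A K C there is a member of A bounded by 1 on K taking the     *)
(* value C: rescale a member of A witnessing that the point is outside. *)
Lemma peak_function {K : set T} {C : R} {w : T} :
  compact K -> 0 < C -> ~ hull A K C w ->
  exists b, [/\ A b, forall v, K v -> `|b v| <= 1 & b w = C].
Proof.
move=> cK C0 /existsNP[a /not_implyP[Aa /negP]]; rewrite -ltNge => aw_gt.
have supa_ge0 : 0 <= supabs K a by apply: supabs_ge0 => //; apply: A_cont.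
have aw0 : 0 < a w by apply: le_lt_trans aw_gt; rewrite mulr_ge0 // ltW.
have coef_ge0 : 0 <= C / a w by rewrite divr_ge0 // ltW.
exists (fun v => C / a w * a v); split;
  [exact: A_scal| |by rewrite divfK ?gt_eqF].
move=> v Kv; rewrite normrM ger0_norm //.
apply: le_trans (_ : C / a w * supabs K a <= 1).
  by rewrite ler_wpM2l // supabs_ge //; apply: A_cont.
by rewrite mulrAC ler_pdivrMr // mul1r ltW.
Qed.

End Hull.

(* (iii) -> (i): the hull is a closed subset of a compact sublevel set of p. *)
Lemma iii_i {T : topologicalType} {R : realType} {A : set (T -> R)} :
  (forall a, A a -> continuous a) -> cond_iii A -> cond_i A.
Proof.
move=> A_cont [p [F [p0 [p_proper [p_bnd [FA [Fsym Fp]]]]]]] K C cK C1.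
have [M pM] := p_bnd K cK.
pose M' := Num.max M 0.
have C0 : 0 <= C by apply: le_trans C1.
apply: (subclosed_compact (closed_hull A_cont K C) (B := p @^-1` `[0, C * M'])).
  apply: p_proper; last exact: segment_compact.
  by move=> x /=; rewrite in_itv /= => /andP[].
move=> w hw /=; rewrite in_itv /= p0 /= -lee_fin (Fp w).
apply: ge_ereal_sup => _ [f Ff <-]; rewrite lee_fin.
apply: le_trans (hw f (FA f Ff)) _; rewrite ler_wpM2l //.
apply: supabs_le => [|v Kv]; first by rewrite le_max lexx orbT.
apply: le_trans (pointwise_sup_norm v Fp Fsym Ff) _.
by apply: le_trans (pM v Kv) _; rewrite le_max lexx.
Qed.

Lemma ii_iii {T : topologicalType} {R : realType} {A : set (T -> R)} :
  cond_ii A -> cond_iii A.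
Proof.
move=> [p [F [p0 [p_cont [p_proper F_props]]]]].
exists p, F; split=> //; split=> //; split=> // K cK.
have [M pM] := continuous_bounded_on_compact p_cont cK.
by exists M => w Kw; apply: le_trans (ler_norm _) (pM w Kw).
Qed.

(* The open-cover characterisation of compactness is stated for pointed      *)
(* spaces; a nonempty compact set makes the space pointed at one of its      *)
(* points. *)
Definition pointed_at {T : topologicalType} (x : T) : Type := T.
HB.instance Definition _ (T : topologicalType) (x : T) :=
  Topological.copy (pointed_at x) T.
HB.instance Definition _ (T : topologicalType) (x : T) :=
  isPointed.Build (pointed_at x) x.

Lemma compact_finite_cover {T : topologicalType} {S : set T} {I : choiceType}
    (D : set I) (f : I -> set T) :
  compact S -> (forall i, D i -> open (f i)) -> S `<=` cover D f ->
  finite_subset_cover D f S.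
Proof.
move=> cS f_open Sf.
have [->|/set0P[x _]] := eqVneq S set0; first by exists finmap.fset0 => // x [].
have : @compact (pointed_at x) S by [].
by rewrite compact_cover; apply.
Qed.

Lemma compact_interior_nbhd {T : topologicalType} {S : set T} :
  locally_compact [set: T] -> compact S -> exists2 L, compact L & S `<=` L°.
Proof.
move=> T_loc cS.
have /choice[U U_nbhs] : forall x : T, exists U : set T, nbhs x U /\ compact U.
  move=> x; have [U xU [cU _]] := T_loc x I.
  by exists U; split=> //; move: xU; rewrite withinET.
have [] := compact_finite_cover S (fun x => (U x)°) cS.
- by move=> x _; apply: open_interior.
- by move=> x Sx; exists x => //; exact: (U_nbhs x).1.
move=> D _ SD; exists (\big[setU/set0]_(x <- finmap.enum_fset D) U x).
  by apply: bigsetU_compact => x _; apply: (U_nbhs x).2.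
move=> y /SD[x /= xD Uxy]; apply: (interiorS _ Uxy) => z Uxz.
by rewrite -bigcup_seq; exists x.
Qed.

Section Exhaustion.
Context {T : topologicalType} {L : nat -> set T}.
Hypothesis L_nested : forall n, L n `<=` (L n.+1)°.
Hypothesis L_cover : forall w, exists n, L n w.

Lemma exhaustion_mono {m n : nat} : (m <= n)%N -> L m `<=` L n.
Proof.
move=> /subnK <-; elim: (n - m)%N => //= d IH w /IH Ldw.
by rewrite addSn; apply: interior_subset; apply: L_nested.
Qed.

Lemma exhaustion_layer {N : nat} {w : T} :
  ~ L N w -> exists2 k, (N <= k)%N & L k.+1 w /\ ~ L k w.
Proof.
move=> nLN; have [j] := L_cover w; elim: j => [|j IH] Ljw.
  by case: nLN; apply: exhaustion_mono Ljw.
have [/IH //|nLj] := pselect (L j w); exists j => //.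
by rewrite leqNgt; apply/negP => jN; apply: nLN; apply: exhaustion_mono Ljw.
Qed.

(* The interiors form an increasing open cover, so a compact set lies in a   *)
(* single L n. *)
Lemma compact_in_exhaustion {K : set T} : compact K -> exists n, K `<=` L n.
Proof.
move=> cK; have [] := compact_finite_cover setT (fun n => (L n)°) cK.
- by move=> n _; apply: open_interior.
- by move=> w _; have [n Lnw] := L_cover w; exists n.+1 => //; apply: L_nested.
move=> D _ KD; exists (\max_(n <- finmap.enum_fset D) n)%N => w /KD[n nD Lnw].
by apply: exhaustion_mono (interior_subset Lnw); apply: leq_bigmax_seq.
Qed.

End Exhaustion.

(* Under (i), there is a compact exhaustion in which the hull of L n with     *)
(* constant n+2 lies inside the interior of L (n+1): take for L (n+1) a      *)
(* compact neighbourhood of that hull and of the n-th set of a countable     *)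
(* compact cover. *)
Lemma hull_exhaustion {T : topologicalType} {R : realType} {A : set (T -> R)} :
  (forall a, A a -> continuous a) -> locally_compact [set: T] ->
  sigma_compact T -> cond_i A ->
  exists L : nat -> set T, [/\ forall n, compact (L n),
    forall n, hull A (L n) n.+2%:R `<=` (L n.+1)°,
    forall n, L n `<=` (L n.+1)° & forall w, exists n, L n w].
Proof.
move=> A_cont T_loc [Ks [cKs Ks_cover]] hi.
have /choice[N N_nbhd] : forall S : set T,
    exists L, compact S -> compact L /\ S `<=` L°.
  move=> S; have [cS|ncS] := pselect (compact S); last by exists set0.
  by have [L cL SL] := compact_interior_nbhd T_loc cS; exists L.
pose L := fix L n :=
  if n is m.+1 then N (hull A (L m) m.+2%:R `|` Ks m) else set0.
have c_next n : compact (L n) -> compact (hull A (L n) n.+2%:R `|` Ks n).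
  by move=> cLn; apply: compactU => //; apply: hi => //; rewrite ler1n.
have cL n : compact (L n).
  by elim: n => [|n IH]; [exact: compact0|exact: (N_nbhd _ (c_next n IH)).1].
have L_next n : hull A (L n) n.+2%:R `|` Ks n `<=` (L n.+1)°.
  exact: (N_nbhd _ (c_next n (cL n))).2.
exists L; split=> // [n w hw|n w Lnw|w].
- by apply: L_next; left.
- by apply: L_next; left; apply: subset_hull => //; rewrite ler1n.
- have : [set: T] w by [].
  rewrite -Ks_cover => -[n _ Knw]; exists n.+1.
  by apply: interior_subset; apply: L_next; right.
Qed.

(* A compact set S disjoint from hull A K C is dominated, above any level     *)
(* c < C, by a finite list of members of A bounded by 1 on K (peak functions *)
(* at the points of S, selected by compactness); the constant 1 is added to  *)
(* the list for later use. *)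
Lemma annulus_family {T : topologicalType} {R : realType} {A : set (T -> R)}
    (A_cont : forall a, A a -> continuous a)
    (A_scal : forall (c : R) a, A a -> A (fun w => c * a w))
    (A_const : forall c : R, A (fun _ => c)) {K S : set T} {c C : R} :
  compact K -> compact S -> 0 < C -> c < C ->
  (forall w, S w -> ~ hull A K C w) ->
  exists l : seq (T -> R), [/\ forall b, b \in l -> A b, (fun _ => 1) \in l,
    forall b w, b \in l -> K w -> `|b w| <= 1 &
    forall w, S w -> exists2 b, b \in l & c < b w].
Proof.
move=> cK cS C0 cC S_out.
have /choice[peak peakP] : forall w, exists b,
    [/\ A b, forall v, K v -> `|b v| <= 1 & S w -> b w = C].
  move=> w; have [Sw|nSw] := pselect (S w).
    have [b [Ab b1 bw]] := peak_function A_cont A_scal cK C0 (S_out w Sw).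
    by exists b.
  by exists (fun _ => 1); split => // v _; rewrite normr1.
have [] := compact_finite_cover S (fun w => [set v | c < peak w v]) cS.
- move=> w _; apply: (@open_comp _ _ (peak w) [set x | c < x]).
    by have [Ab _ _] := peakP w; move=> x _; apply: A_cont.
  exact: open_gt.
- by move=> w Sw; exists w => //=; have [_ _ ->] := peakP w.
move=> D _ SD; exists ((fun _ => 1) :: map peak (finmap.enum_fset D)); split.
- move=> b; rewrite inE => /predU1P[->|/mapP[w _ ->]]; first exact: A_const.
  by have [] := peakP w.
- exact: mem_head.
- move=> b v; rewrite inE => /predU1P[-> _|/mapP[w _ ->]].
    by rewrite normr1.
  by have [_ peak_bnd _] := peakP w; apply: peak_bnd.
- by move=> v /SD[w wD cv]; exists (peak w) => //; rewrite inE map_f ?orbT.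
Qed.

Lemma annulus_families {T : topologicalType} {R : realType} {A : set (T -> R)}
    (A_cont : forall a, A a -> continuous a)
    (A_scal : forall (c : R) a, A a -> A (fun w => c * a w))
    (A_const : forall c : R, A (fun _ => c)) {L : nat -> set T} :
  (forall n, compact (L n)) -> (forall n, hull A (L n) n.+2%:R `<=` (L n.+1)°) ->
  exists B : nat -> seq (T -> R), [/\ forall n b, b \in B n -> A b,
    forall n, (fun _ => 1) \in B n,
    forall n b w, b \in B n -> L n w -> `|b w| <= 1 &
    forall n w, L n.+2 w -> ~ (L n.+1)° w ->
      exists2 b, b \in B n & n.+1%:R < b w].
Proof.
move=> L_compact L_hull.
have /choice[B B_spec] n : exists l : seq (T -> R),
    [/\ forall b, b \in l -> A b, (fun _ => 1) \in l,
        forall b w, b \in l -> L n w -> `|b w| <= 1 &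
        forall w, (L n.+2 `&` ~` (L n.+1)°) w ->
          exists2 b, b \in l & n.+1%:R < b w].
  apply: (annulus_family A_cont A_scal A_const (C := n.+2%:R)) => //;
    rewrite ?ltr0n ?ltr_nat //.
    by apply: compact_closedI => //; apply: open_closedC; apply: open_interior.
  by move=> w [_ nLw] /L_hull.
exists B; split=> [n b|n|n b w|n w Lw nLw]; case: (B_spec n) => //.
- by move=> + _ _ _; apply.
- by move=> _ _ + _; apply.
- by move=> _ _ _; apply.
Qed.

Lemma ereal_sup_dominated {R : realType} {X : eqType} (F : set X) (v : X -> R)
    (l : seq X) :
  (forall x, x \in l -> F x) ->
  (forall x, F x -> exists2 y, y \in l & v x <= v y) ->
  (ereal_sup [set (v x)%:E | x in F] = \big[maxe/-oo]_(y <- l) (v y)%:E)%E.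
Proof.
move=> lF F_dom; apply/le_anti/andP; split.
  apply: ge_ereal_sup => _ [x Fx <-]; have [y yl xy] := F_dom x Fx.
  by apply: bigmax_sup_seq yl _ _; rewrite ?lee_fin.
rewrite big_seq; apply: bigmax_le => [|y yl]; first exact: leNye.
by apply: ereal_sup_ubound; exists y => //; apply: lF.
Qed.

Lemma bigmaxe_EFin {R : realType} {X : eqType} {l : seq X} {v : X -> R}
    {x0 : X} {c : R} :
  x0 \in l -> c <= v x0 ->
  (\big[maxe/-oo]_(x <- l) (v x)%:E = (\big[Num.max/c]_(x <- l) v x)%:E)%E.
Proof.
move=> x0l cx0; rewrite -EFin_bigmax; apply/le_anti/andP; split.
  rewrite big_seq; apply: bigmax_le => [|x xl]; first exact: leNye.
  exact: le_bigmax_seq.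
rewrite big_seq; apply: bigmax_le => [|x xl]; last exact: le_bigmax_seq.
by apply: bigmax_sup_seq x0l _ _; rewrite ?lee_fin.
Qed.

Lemma continuous_bigmax {T : topologicalType} {R : realType} (l : seq (T -> R))
    (c : R) :
  (forall f, f \in l -> continuous f) ->
  continuous (fun w => \big[Num.max/c]_(f <- l) f w).
Proof.
elim: l => [|g l IH] l_cont x.
  by under eq_fun do rewrite big_nil; exact: cvg_cst.
under eq_fun do rewrite big_cons.
apply: continuous_max; first by apply: l_cont; rewrite mem_head.
by apply: IH => f fl; apply: l_cont; rewrite inE fl orbT.
Qed.

Lemma proper_of_sublevels {T : topologicalType} {R : realType} (p : T -> R) :
  continuous p ->
  (forall N : nat, exists2 K, compact K & [set w | p w <= N%:R] `<=` K) ->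
  proper_nonneg p.
Proof.
move=> p_cont sublevel B _ cB.
have [M _ BM] := compact_real_bounded cB.
have [K cK pK] := sublevel (Num.truncn M).+1.
apply: (subclosed_compact _ cK).
  apply: preimage_closed; first by move=> x _; apply: p_cont.
  exact: compact_closed (@Rhausdorff R) cB.
move=> w /BM pwM; apply: pK; apply: le_trans (ler_norm _) _.
exact: le_trans pwM (ltW (truncnS_gt M)).
Qed.

Definition sup_family {T : Type} {R : realType} (F : set (T -> R)) (w : T) : R :=
  fine (ereal_sup [set (f w)%:E | f in F]).

Section LocallyFiniteSup.
Context {T : topologicalType} {R : realType} {F : set (T -> R)}.
Context {L : nat -> set T} {layer : nat -> seq (T -> R)}.
Hypothesis L_nested : forall n, L n `<=` (L n.+1)°.
Hypothesis L_cover : forall w, exists n, L n w.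
Hypothesis layer_sub : forall n f, f \in layer n -> F f.
Hypothesis layer_one : forall n, (fun _ => 1) \in layer n.
Hypothesis layer_dom : forall n w f, L n w -> F f ->
  exists2 g, g \in layer n & f w <= g w.

Lemma sup_family_layer_ereal {n : nat} {w : T} : L n w ->
  (ereal_sup [set (f w)%:E | f in F] =
     \big[maxe/-oo]_(f <- layer n) (f w)%:E)%E.
Proof.
move=> Lnw; apply: (ereal_sup_dominated F (fun f => f w)) => f.
  exact: layer_sub.
exact: layer_dom.
Qed.

Lemma sup_family_layer {n : nat} {w : T} : L n w ->
  sup_family F w = \big[Num.max/1]_(f <- layer n) f w.
Proof.
move=> Lnw; rewrite /sup_family (sup_family_layer_ereal Lnw).
by rewrite (bigmaxe_EFin (c := 1) (layer_one n)).
Qed.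

Lemma sup_family_pointwise : is_pointwise_sup F (sup_family F).
Proof.
move=> w; have [n Lnw] := L_cover w; rewrite /sup_family.
by rewrite (sup_family_layer_ereal Lnw) (bigmaxe_EFin (c := 1) (layer_one n)).
Qed.

Lemma sup_family_ge1 (w : T) : 1 <= sup_family F w.
Proof.
by have [n Lnw] := L_cover w; rewrite (sup_family_layer Lnw) bigmax_ge_id.
Qed.

(* Near a point of L n the supremum is the maximum over layer (n+1). *)
Lemma sup_family_continuous :
  (forall n f, f \in layer n -> continuous f) -> continuous (sup_family F).
Proof.
move=> layer_cont x; have [n Lnx] := L_cover x.
have near_layer : {near x,
    (fun w => \big[Num.max/1]_(f <- layer n.+1) f w) =1 sup_family F}.
  by apply: filterS (L_nested n x Lnx) => w Lw; rewrite (sup_family_layer Lw).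
apply: cvg_trans (near_eq_cvg near_layer) _.
rewrite (sup_family_layer (interior_subset (L_nested n x Lnx))).
exact: continuous_bigmax (layer_cont n.+1) x.
Qed.

Lemma sup_family_local_max (K : set T) : compact K ->
  exists (m : nat) (g : 'I_m -> T -> R), (forall k, F (g k)) /\
    forall w, K w ->
      ((sup_family F w)%:E = \big[maxe/-oo]_(k < m) (g k w)%:E)%E.
Proof.
move=> cK; have [n KL] := compact_in_exhaustion L_nested L_cover cK.
exists (size (layer n)), (fun k => nth 0 (layer n) k); split.
  by move=> k; apply: (layer_sub n); apply: mem_nth.
move=> w Kw; rewrite sup_family_pointwise (sup_family_layer_ereal (KL w Kw)).
by rewrite (big_nth 0) big_mkord.
Qed.

End LocallyFiniteSup.

Definition sym_layer {T : Type} {R : realType} (B : nat -> seq (T -> R))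
    (n : nat) : seq (T -> R) :=
  B n ++ map -%R (B n).

Definition sym_family {T : Type} {R : realType} (B : nat -> seq (T -> R)) :
    set (T -> R) :=
  [set f | exists n, f \in sym_layer B n].

Definition cumulative_layer {T : Type} {R : realType} (B : nat -> seq (T -> R))
    (m : nat) : seq (T -> R) :=
  flatten [seq sym_layer B k | k <- iota 0 m.+1].

Section SymmetricFamily.
Context {T : topologicalType} {R : realType} {A : set (T -> R)}.
Context {L : nat -> set T} {B : nat -> seq (T -> R)}.
Hypothesis A_scal : forall (c : R) a, A a -> A (fun w => c * a w).
Hypothesis L_nested : forall n, L n `<=` (L n.+1)°.
Hypothesis L_cover : forall w, exists n, L n w.
Hypothesis B_in_A : forall n b, b \in B n -> A b.
Hypothesis B_one : forall n, (fun _ => 1) \in B n.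
Hypothesis B_bounded : forall n b w, b \in B n -> L n w -> `|b w| <= 1.
Hypothesis B_large : forall n w, L n.+2 w -> ~ (L n.+1)° w ->
  exists2 b, b \in B n & n.+1%:R < b w.

Lemma sym_layer_bounded {n : nat} {f : T -> R} {w : T} :
  f \in sym_layer B n -> L n w -> `|f w| <= 1.
Proof.
rewrite mem_cat => /orP[fB|/mapP[b bB ->]] Lnw; first exact: B_bounded fB Lnw.
by rewrite /= normrN; exact: B_bounded bB Lnw.
Qed.

Lemma sym_family_sub : sym_family B `<=` A.
Proof.
move=> f [n]; rewrite mem_cat => /orP[/B_in_A //|/mapP[b /B_in_A Ab ->]].
have -> : - b = (fun w => -1 * b w) by apply/funext => w; rewrite mulN1r.
exact: A_scal.
Qed.

Lemma sym_family_symmetric : symmetric_family (sym_family B).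
Proof.
move=> f [n fn]; exists n; move: fn.
rewrite !mem_cat => /orP[fB|/mapP[b bB ->]].
  by apply/orP; right; exact: map_f.
have -> : (fun w => - (- b) w) = b by apply/funext => w; rewrite opprK.
by rewrite bB.
Qed.

Lemma cumulative_layer_sub (m : nat) (f : T -> R) :
  f \in cumulative_layer B m -> sym_family B f.
Proof. by move=> /flatten_mapP[k _ fk]; exists k. Qed.

Lemma cumulative_layer_one (m : nat) : (fun _ => 1) \in cumulative_layer B m.
Proof.
by apply/flatten_mapP; exists 0%N; rewrite ?mem_iota // mem_cat B_one.
Qed.

(* On L m, members of index k > m are bounded by 1, i.e. by the constant 1. *)
Lemma cumulative_layer_dom (m : nat) (w : T) (f : T -> R) :
  L m w -> sym_family B f ->
  exists2 g, g \in cumulative_layer B m & f w <= g w.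
Proof.
move=> Lmw [k fk]; have [km|mk] := leqP k m.
  by exists f => //; apply/flatten_mapP; exists k; rewrite ?mem_iota.
exists (fun _ => 1); first exact: cumulative_layer_one.
apply: le_trans (ler_norm _) (sym_layer_bounded fk _).
exact: (exhaustion_mono L_nested (ltnW mk) w Lmw).
Qed.

(* Outside L (N+1) some member exceeds N: such a point lies on an annulus     *)
(* L (k+2) \ L (k+1) with k >= N. *)
Lemma sym_family_large {N : nat} {w : T} :
  ~ L N.+1 w -> exists2 f, sym_family B f & N%:R < f w.
Proof.
move=> nLw.
have [[|k] // Nk [Lw nLkw]] := exhaustion_layer L_nested L_cover nLw.
have [b bB bw] := B_large k w Lw (fun Lkw => nLkw (interior_subset Lkw)).
exists b; first by exists k; rewrite mem_cat bB.
by apply: le_lt_trans bw; rewrite ler_nat ltnW.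
Qed.

End SymmetricFamily.

Lemma i_ii_strong {T : topologicalType} {R : realType} {A : set (T -> R)} :
  (forall a, A a -> continuous a) ->
  (forall (c : R) a, A a -> A (fun w => c * a w)) ->
  (forall c : R, A (fun _ => c)) ->
  locally_compact [set: T] -> sigma_compact T -> cond_i A -> cond_ii_strong A.
Proof.
move=> A_cont A_scal A_const T_loc T_sig hi.
have [L [L_compact L_hull L_nested L_cover]] :=
  hull_exhaustion A_cont T_loc T_sig hi.
have [B [B_in_A B_one B_bnd B_large]] :=
  annulus_families A_cont A_scal A_const L_compact L_hull.
pose F := sym_family B.
have layer_sub := cumulative_layer_sub (B := B).
have layer_one := cumulative_layer_one B_one.
have layer_dom := cumulative_layer_dom L_nested B_one B_bnd.
have F_in_A : F `<=` A := sym_family_sub A_scal B_in_A.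
have p_sup := sup_family_pointwise L_cover layer_sub layer_one layer_dom.
have p_cont : continuous (sup_family F).
  apply: (sup_family_continuous L_nested L_cover layer_sub layer_one layer_dom).
  by move=> m f /layer_sub /F_in_A; apply: A_cont.
have p_sublevel N : [set w | sup_family F w <= N%:R] `<=` L N.+1.
  move=> w /= pwN; apply: contrapT => nLw.
  have [f Ff fw] := sym_family_large L_nested L_cover B_large nLw.
  by move: pwN; rewrite leNgt (lt_le_trans fw (pointwise_sup_ge w p_sup Ff)).
exists (sup_family F), F; split.
  move=> w; apply: le_trans ler01 _.
  exact: (sup_family_ge1 L_cover layer_sub layer_one layer_dom).
split=> //; split.
  by apply: proper_of_sublevels => // N; exists (L N.+1).
split=> //; split; first exact: sym_family_symmetric.
split=> //.
exact: (sup_family_local_max L_nested L_cover layer_sub layer_one layer_dom).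
Qed.

Lemma ii_of_ii_strong {T : topologicalType} {R : realType} {A : set (T -> R)} :
  cond_ii_strong A -> cond_ii A.
Proof.
by move=> [p [F [p0 [p_cont [p_proper [FA [Fsym [Fp _]]]]]]]]; exists p, F.
Qed.

Theorem mainTheorem1 (R : realType) (Omega : topologicalType) (A : set (Omega -> R))
  (hHaus : hausdorff_space Omega)
  (hloc : locally_compact [set: Omega])
  (hsig : sigma_compact Omega)
  (hcont : forall a, A a -> continuous a)
  (hadd : forall a b, A a -> A b -> A (fun w => a w + b w))
  (hscal : forall (c : R) a, A a -> A (fun w => c * a w))
  (hconst : forall c : R, A (fun _ => c))
  (hsep : forall x y : Omega, x <> y -> exists a, A a /\ a x <> a y) :
  (cond_i A <-> cond_ii A) /\ (cond_ii A <-> cond_iii A) /\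
  (cond_i A -> cond_ii_strong A).
Proof.
have i_to_ii_strong := i_ii_strong hcont hscal hconst hloc hsig.
have iii_to_i := iii_i hcont.
split; first by split=> [/i_to_ii_strong/ii_of_ii_strong|/ii_iii/iii_to_i].
split=> //; split; first exact: ii_iii.
by move=> /iii_to_i/i_to_ii_strong/ii_of_ii_strong.
Qed.
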